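(* For $l\in\mathbb N$, $a>0$ and $b>0$, $$\sum_{k=0}^{l-1}\binom{k+l}{l}\frac{a^kb^l+a^lb^k}{(a+b)^{k+l}(k+l)}=\frac1l.$$ *)

From mathcomp Require Import all_boot all_order all_algebra.
Set Implicit Arguments. Unset Strict Implicit. Unset Printing Implicit Defensive.

(** Put p := a / (a + b) and q := b / (a + b), so that p + q = 1.  Since
    'C(k + l, l) / (k + l) = 'C(k + l - 1, l - 1) / l, the sum is l^-1 times
    \sum_(k < l) 'C(k + l - 1, l - 1) (p^l q^k + q^l p^k).  In the problem of
    points, the first (resp. second) half of this sum is the probability that
    a player winning each round with probability p (resp. q) is the first to
    win l rounds; as exactly one player is, the sum equals 1.  The complement
    identity is proved by induction on the number of rounds the second player
    needs: increasing it moves the same amount of probability from the second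
    player to the first. *)

From mathcomp Require Import all_boot all_order all_algebra.
From mathcomp Require Import ring.
Set Implicit Arguments.
Unset Strict Implicit.
Unset Printing Implicit Defensive.
Import Order.TTheory GRing.Theory Num.Theory.
Local Open Scope ring_scope.

Lemma bin_addC (m n : nat) : 'C(m + n, m) = 'C(m + n, n).
Proof. by rewrite -bin_sub ?leq_addr // addKn. Qed.

Lemma bin_divS (R : numFieldType) (k l : nat) :
  'C(k + l.+1, l.+1)%:R / (k + l.+1)%:R = 'C(k + l, l)%:R / l.+1%:R :> R.
Proof.
apply/eqP; rewrite eqr_div ?pnatr_eq0 ?addnS // -!natrM eqr_nat.
by rewrite mulnC -(mul_bin_diag (k + l).+1) mulnC.
Qed.

(* The probability that, in independent rounds won with probabilities x and y,
   the first player wins m.+1 rounds before the second one wins n rounds. *)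
Definition win_prob (R : comNzRingType) (x y : R) (m n : nat) : R :=
  \sum_(k < n) 'C(k + m, m)%:R * x ^+ m.+1 * y ^+ k.

Lemma win_probSl (R : comNzRingType) (p q : R) (pq1 : p + q = 1) (m n : nat) :
  win_prob p q m n.+1 =
    win_prob p q m.+1 n.+1 + 'C(n + m.+1, m.+1)%:R * p ^+ m.+1 * q ^+ n.+1.
Proof.
have -> : p = 1 - q by rewrite -pq1 addrK.
rewrite /win_prob; elim: n => [|n IHn].
  by rewrite !big_ord1 /= !add0n !binn !exprS; ring.
rewrite big_ord_recr /= IHn [in RHS]big_ord_recr /= !addSn -addnS binS !natrD.
set S := \sum_(_ < _) _; rewrite !exprS; ring.
Qed.

Lemma win_prob_complement (R : comNzRingType) (p q : R) (pq1 : p + q = 1)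
    (m n : nat) :
  win_prob p q m n.+1 + win_prob q p n m.+1 = 1.
Proof.
elim: n => [|n IHn].
  have -> : q = 1 - p by rewrite -pq1 addrAC subrr add0r.
  rewrite /win_prob big_ord1 add0n binn mul1r.
  under eq_bigr do rewrite addn0 bin0 mul1r expr1.
  by rewrite -mulr_sumr expr0 mulr1 -opprB mulNr -subrX1 opprB addrC subrK.
have qp1 : q + p = 1 by rewrite addrC.
rewrite -[RHS]IHn (win_probSl qp1 n m) /win_prob [in LHS]big_ord_recr /=.
rewrite -bin_addC [(n.+1 + m)%N]addnC mulrAC -addrA.
by congr (_ + _); rewrite addrC.
Qed.

Theorem lemma2p2 (R : realFieldType) (l : nat) (a b : R)
  (hl : (0 < l)%N) (ha : 0 < a) (hb : 0 < b) :
  \sum_(0 <= k < l)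
     ('C(k + l, l))%:R * (a ^+ k * b ^+ l + a ^+ l * b ^+ k)
       / ((a + b) ^+ (k + l) * (k + l)%:R)
  = (l%:R)^-1.
Proof.
case: l hl => [//|l] _.
set p := a / (a + b); set q := b / (a + b).
have pq1 : p + q = 1 by rewrite -mulrDl divff // gt_eqF // addr_gt0.
have powE i j : p ^+ i * q ^+ j = a ^+ i * b ^+ j / (a + b) ^+ (i + j).
  by rewrite !expr_div_n mulf_div exprD.
rewrite -[RHS]mulr1 -[X in _ * X](win_prob_complement pq1 l l) /win_prob -big_split.
rewrite mulr_sumr big_mkord; apply: eq_bigr => k _ /=.
rewrite -!mulrA -mulrDr [RHS]mulrCA [RHS]mulrA -bin_divS.
rewrite [q ^+ _ * _]mulrC !powE [(l.+1 + k)%N]addnC -mulrDl mulf_div.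
by rewrite mulrA (addrC (a ^+ l.+1 * _)) (mulrC (k + l.+1)%:R).
Qed.
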